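(* Let $C$ be an $(n,(n-k)/2,\delta;\mu)_q$ convolutional code over $\mathbf F_q$ such that $C\subseteq C^\perp$ (Euclidean dual). Then there exists an $[(n,k,n\mu;\delta,d_f)]_q$ convolutional stabilizer code with $d_f=\mathrm{wt}(C^\perp\setminus C)$. It is pure if $\mathrm{wt}(C^\perp\setminus C)=\mathrm{wt}(C^\perp)$.
   Context: Classical convolutional codes: An $(n,k,\delta;\mu)_q$ convolutional code is a submodule $\{u(D)G(D)\}$ of $\mathbf F_q[D]^n$ generated by a right-invertible $G(D)=(g_{ij})\in\mathbf F_q[D]^{k\times n}$ with $\nu_i=\max_j\deg g_{ij}$, degree $\delta=\sum\nu_i$ equal to the maximal degree of a $k\times k$ minor, memory $\mu=\max\nu_i$. Weight = number of nonzero coefficients; for a set $A$, $\mathrm{wt}(A)$ is the minimal weight of a nonzero element. $\Gamma_q$ = finitely supported sequences over $\mathbf F_q$; $\sigma$ maps $(u_0,\dots,u_{n-1})\in\mathbf F_q[D]^n$ to the coefficients of $\sum_iD^iu_i(D^n)$; codes are identified with their images. Euclidean dual $C^\perp=\{u\in\Gamma_q:\sum_iu_iv_i=0\ \forall v\in C\}$. Quantum setup: $X(a)|x\rangle=|x+a\rangle$, $Z(b)|x\rangle=\omega^{\mathrm{tr}(bx)}|x\rangle$ on $\mathbf C^q$ ($\omega=e^{2\pi i/p}$, $p=\mathrm{char}\,\mathbf F_q$), $I=X(0)$. $P_t$ is the group generated by $((t+1)n+m)$-fold tensor products of the $X(a),Z(b)$, with center $Z_t$; $P_\infty$ the group of infinite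 tensor products with almost all factors $I$. For abelian $S_0\le P_0$, $S_t=\langle N\otimes I^{\otimes n},I^{\otimes tn}\otimes M: N\in S_{t-1},M\in S_0\rangle$, with conditions (S1) $I^{\otimes tn}\otimes M$, $N\otimes I^{\otimes tn}$ commute for $M,N\in S_0$, $t\ge1$; (S2) $\dim_{\mathbf F_q}S_tZ_t/Z_t=(t+1)(n-k)$; (S3) $S_t\cap Z_t$ trivial. $S=\langle I^{\otimes tn}\otimes M\otimes I^{\otimes\infty}\rangle$; its $+1$-eigenspace is an $[(n,k,m)]_q$ convolutional stabilizer code. Weight of $E\in P_\infty$ = number of non-identity factors; $d_f=\min\{\mathrm{wt}(e): e\in C_{P_\infty}(S)\setminus Z(P_\infty)S\}$. With normal basis $(\beta,\beta^q)$ of $\mathbf F_{q^2}/\mathbf F_q$, $\tau(\omega^cX(a_0)Z(b_0)\otimes\cdots)=(\beta a_0+\beta^qb_0,\dots)$; the degree of the quantum code is the degree of $\sigma^{-1}\tau(S)$. $[(n,k,m;\delta,d_f)]_q$ denotes a code of degree $\delta$ and free distance $d_f$. Pure: the stabilizer contains no element of weight less than $d_f$ other than scalars. *)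

From HB Require Import structures.
From mathcomp Require Import all_boot all_order all_algebra all_field.
Set Implicit Arguments.
Unset Strict Implicit.
Unset Printing Implicit Defensive.
Import GRing.Theory.
Local Open Scope ring_scope.

Definition is_min (P : nat -> Prop) (d : nat) : Prop :=
  P d /\ forall e, P e -> (d <= e)%N.

(* Finitely supported sequences Gamma_q are represented by polynomials        *)
(* (the sequence of coefficients); codes are identified with their images     *)
(* under sigma, i.e. are sets of polynomials (= elements of Gamma).           *)

Section ConvCodes.
Variable K : fieldType.

Definition sigma (n : nat) (u : 'rV[{poly K}]_n) : {poly K} :=
  \sum_(i < n) 'X^i * ((u 0 i) \Po 'X^n).

Definition row_deg (kk n : nat) (G : 'M[{poly K}]_(kk, n)) (i : 'I_kk) : nat :=
  (\max_(j < n) (size (G i j)).-1)%N.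

Definition max_minor_deg (kk n : nat) (G : 'M[{poly K}]_(kk, n)) : nat :=
  (\max_(f : {ffun 'I_kk -> 'I_n} | injectiveb f)
      (size (\det (colsub f G))).-1)%N.

Definition is_conv_code (n kk delta mu : nat) (C : {poly K} -> Prop) : Prop :=
  exists G : 'M[{poly K}]_(kk, n),
    [/\ (exists H : 'M[{poly K}]_(n, kk), G *m H = 1%:M),
        delta = (\sum_(i < kk) row_deg G i)%N,
        delta = max_minor_deg G,
        mu = (\max_(i < kk) row_deg G i)%N &
        (forall v, C v <-> exists u : 'rV[{poly K}]_kk, v = sigma (u *m G))].

Definition seq_wt (v : {poly K}) : nat := count (fun c => c != 0) v.

Definition is_min_wt (A : {poly K} -> Prop) (d : nat) : Prop :=
  is_min (fun w => exists v, [/\ A v, v != 0 & seq_wt v = w]) d.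

Definition edual (C : {poly K} -> Prop) : {poly K} -> Prop :=
  fun v => forall u, C u -> \sum_(i < size u) u`_i * v`_i = 0.

End ConvCodes.

(* p = char F, q = #|F| = p^r.  The element omega^c X(a) Z(b) of P_infty      *)
(* (a, b finitely supported sequences over F) is represented by the triple    *)
(* (c, a, b) with c in Z/pZ and a, b polynomials (coefficient sequences).     *)

Section Pauli.
Variable F : finFieldType.

Definition pchr : nat := pdiv #|F|.
Definition fdeg : nat := logn pchr #|F|.

Definition ftr (x : F) : F := \sum_(i < fdeg) x ^+ (pchr ^ i).

(* the trace, read as an element of Z/pZ (prime field k%:R <-> k) *)
Definition trZ (x : F) : 'Z_pchr :=
  odflt 0 [pick k : 'Z_pchr | ((k : nat)%:R : F) == ftr x].

Record pauli := Pauli { ph : 'Z_pchr; xa : {poly F}; zb : {poly F} }.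

Definition pone : pauli := Pauli 0 0 0.

(* (w^c X(a)Z(b)) (w^c' X(a')Z(b')) = w^(c+c'+tr(b.a')) X(a+a') Z(b+b') *)
Definition pmul (g h : pauli) : pauli :=
  Pauli (ph g + ph h + trZ (\sum_(i < size (zb g)) (zb g)`_i * (xa h)`_i))
        (xa g + xa h) (zb g + zb h).

(* (w^c X(a)Z(b))^-1 = w^(-c + tr(b.a)) X(-a) Z(-b) *)
Definition pinv (g : pauli) : pauli :=
  Pauli (- ph g + trZ (\sum_(i < size (zb g)) (zb g)`_i * (xa g)`_i))
        (- xa g) (- zb g).

Definition pcommute (g h : pauli) : Prop := pmul g h = pmul h g.

(* tensoring on the left with I^{s}:  I^{(x) s} (x) g *)
Definition pshift (s : nat) (g : pauli) : pauli :=
  Pauli (ph g) (xa g * 'X^s) (zb g * 'X^s).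

(* P_N : tensor products of N factors (padded with I^{(x) infty}) *)
Definition inP (N : nat) (g : pauli) : Prop :=
  (size (xa g) <= N)%N /\ (size (zb g) <= N)%N.

Definition Pinf (g : pauli) : Prop := True.

Definition pwt (g : pauli) : nat :=
  count (fun i => ((xa g)`_i != 0) || ((zb g)`_i != 0))
        (iota 0 (maxn (size (xa g)) (size (zb g)))).

Inductive gen (A : pauli -> Prop) : pauli -> Prop :=
| gen_one : gen A pone
| gen_in g : A g -> gen A g
| gen_mul g h : gen A g -> gen A h -> gen A (pmul g h)
| gen_inv g : gen A g -> gen A (pinv g).

Definition is_subgroup (A : pauli -> Prop) : Prop :=
  [/\ A pone, forall g h, A g -> A h -> A (pmul g h) & forall g, A g -> A (pinv g)].

Definition is_abelian (A : pauli -> Prop) : Prop :=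
  forall g h, A g -> A h -> pcommute g h.

Definition center (G : pauli -> Prop) (z : pauli) : Prop :=
  G z /\ forall g, G g -> pcommute z g.

Definition centralizer (G A : pauli -> Prop) (e : pauli) : Prop :=
  G e /\ forall s, A s -> pcommute e s.

(* the vector (a_0..a_{N-1} | b_0..b_{N-1}) in F_q^{2N}: image of g in P_t/Z_t *)
Definition symvec (N : nat) (g : pauli) : 'rV[F]_(N + N) :=
  row_mx (\row_(i < N) (xa g)`_i) (\row_(i < N) (zb g)`_i).

Section Stab.
Variables (n k m : nat) (S0 : pauli -> Prop).

(* number of qudits of P_t *)
Definition Nt (t : nat) : nat := ((t + 1) * n + m)%N.

Fixpoint Sfam (t : nat) : pauli -> Prop :=
  match t with
  | 0 => S0
  | t'.+1 => gen (fun g => Sfam t' g \/ exists M, S0 M /\ g = pshift (t'.+1 * n) M)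
  end.

Definition Sfull : pauli -> Prop :=
  gen (fun g => exists t M, S0 M /\ g = pshift (t * n) M).

Definition condS1 : Prop :=
  forall t, (1 <= t)%N -> forall M N, S0 M -> S0 N -> pcommute (pshift (t * n) M) N.

(* dim_{F_q} S_t Z_t / Z_t = (t+1)(n-k): the image of S_t in F_q^{2N_t}
   is an F_q-subspace of dimension (t+1)(n-k), the row space of a
   row-free (t+1)(n-k) x 2N_t matrix B. *)
Definition condS2 : Prop :=
  forall t, exists B : 'M[F]_((t + 1) * (n - k), Nt t + Nt t),
    row_free B /\
    forall v : 'rV[F]_(Nt t + Nt t),
      (exists g, Sfam t g /\ symvec (Nt t) g = v) <-> (v <= B)%MS.

Definition condS3 : Prop :=
  forall t g, Sfam t g -> center (inP (Nt t)) g -> g = pone.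

Definition is_conv_stab_code : Prop :=
  [/\ (forall g, S0 g -> inP (n + m) g),
      is_subgroup S0, is_abelian S0, condS1 & (condS2 /\ condS3)].

Definition free_dist (d : nat) : Prop :=
  is_min (fun w => exists e,
             [/\ centralizer Pinf Sfull e,
                 ~ (exists z s, [/\ center Pinf z, Sfull s & e = pmul z s])
               & pwt e = w]) d.

Definition is_pure (d : nat) : Prop :=
  forall g, Sfull g -> (pwt g < d)%N -> center Pinf g.

(* degree of the quantum code: degree of sigma^{-1} tau (S), where
   tau uses the normal basis (beta, beta^q) of L = F_{q^2} over F_q. *)
Definition tau (L : fieldExtType F) (beta : L) (g : pauli) : {poly L} :=
  \poly_(i < maxn (size (xa g)) (size (zb g)))
     ((xa g)`_i *: beta + (zb g)`_i *: beta ^+ #|F|).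

Definition has_degree (L : fieldExtType F) (beta : L) (delta : nat) : Prop :=
  exists kk mu', is_conv_code n kk delta mu' (fun v => exists g, Sfull g /\ v = tau beta g).

End Stab.
End Pauli.

From HB Require Import structures.
From mathcomp Require Import all_boot all_order all_algebra all_field.
From mathcomp Require Import zify.
From Stdlib Require Import Classical.
Import GRing.Theory.
Local Open Scope ring_scope.
Set Implicit Arguments.
Unset Strict Implicit.

(* Since [C] is self-orthogonal, the trace-form phases of the Paulis [X(a)Z(b)] with
   [a, b] in [C] all vanish, so they form an abelian group [S], generated by the shifts of
   [S_0 = {X(a)Z(b) : a, b in the F-span of the rows of G}]. The vectors of [S_t] are
   the injective image of [(t + 1)(n - k)] scalar information symbols, since [G]
   has a right inverse. The
   trace form being nondegenerate, the centralizer of [S] is [{w^c X(a)Z(b) : a, b in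
   C^perp}] while [Z(P_infty) S] is [{w^c X(a)Z(b) : a, b in C}], so both the free
   distance and purity reduce to weights of [C^perp \ C] and [C^perp]. Finally [tau(S)]
   is the code generated by [G] over [F_{q^2}], with the same degrees. *)

Section TraceForm.
Variable F : finFieldType.
Local Notation p := (pchr F).
Local Notation r := (fdeg F).

Lemma pchr_spec : [/\ prime p, p \in [pchar F] & #|F| = (p ^ r)%N].
Proof.
have [q q_pr qF] := finPcharP F.
have cardF : #|F| = (q ^ logn q #|F|)%N := card_pprimeChar qF.
have logF_gt0 : (0 < logn q #|F|)%N.
  case E: (logn q #|F|) => [|e] //; move: cardF (finNzRing_gt1 F).
  by rewrite E expn0 => ->.
have pq : p = q.
  rewrite /pchr cardF; move: logF_gt0; case: (logn q #|F|) => // e _.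
  by rewrite pdiv_pfactor.
by rewrite /fdeg pq.
Qed.

Lemma pchr_gt1 : (1 < p)%N.
Proof. by case: pchr_spec => /prime_gt1. Qed.

Lemma fdeg_gt0 : (0 < r)%N.
Proof.
by case: pchr_spec (finNzRing_gt1 F) => _ _ ->; case: (r) => //; rewrite expn0.
Qed.

Lemma natr_inj_lt_pchr (k1 k2 : nat) : (k1 < p)%N -> (k2 < p)%N ->
  (k1%:R : F) = k2%:R -> k1 = k2.
Proof.
case: pchr_spec => _ pF _.
wlog le12 : k1 k2 / (k1 <= k2)%N.
  move=> W lt1 lt2 eq12; case: (leqP k1 k2) => le; first exact: W.
  by apply/esym/W => //; apply: ltnW.
move=> _ lt2 eq12.
have : (p %| k2 - k1)%N by rewrite (dvdn_pcharf pF) natrB // eq12 subrr.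
move/dvdn_leq; case E: (k2 - k1)%N => [|d]; first by move=> _; lia.
by move=> /(_ isT); lia.
Qed.

Lemma ltn_Zp_pchr (k : 'Z_p) : (k < p)%N.
Proof. by rewrite -[X in (_ < X)%N](Zp_cast pchr_gt1). Qed.

Lemma trZ_eq x (k : 'Z_p) : ((k : nat)%:R : F) = ftr x -> trZ x = k.
Proof.
move=> hk; rewrite /trZ; case: pickP => [k' /eqP hk' | /(_ k)] /=.
  by apply: val_inj; apply: natr_inj_lt_pchr; rewrite ?ltn_Zp_pchr // hk' hk.
by rewrite hk eqxx.
Qed.

Lemma ftr0 : ftr (0 : F) = 0.
Proof.
by rewrite /ftr big1 // => i _; rewrite expr0n expn_eq0 gtn_eqF ?(ltnW pchr_gt1).
Qed.

Lemma trZ0 : trZ (0 : F) = 0.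
Proof. by apply: trZ_eq; rewrite ftr0. Qed.

(* The fixed points of the Frobenius are the [p] roots of ['X^p - 'X], i.e. the prime field. *)
Lemma Frobenius_fixed_natr (z : F) : z ^+ p = z -> exists k : 'Z_p, ((k : nat)%:R : F) = z.
Proof.
case: pchr_spec => _ pF _ zp.
case: (boolP [exists k : 'Z_p, ((k : nat)%:R : F) == z]) => [/existsP [k /eqP] | /existsPn notin].
  by exists k.
exfalso.
pose P : {poly F} := 'X^p - 'X.
pose s := z :: [seq (k%:R : F) | k <- iota 0 p].
have sizeP : size P = p.+1 by rewrite size_polyDl ?size_polyXn // size_polyN size_polyX ltnS pchr_gt1.
have P_neq0 : P != 0 by rewrite -size_poly_eq0 sizeP.
have s_roots : all (root P) s.
  apply/allP=> x; rewrite inE => /orP [/eqP -> | /mapP [k _ ->]];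
    rewrite /root /P !hornerE; first by rewrite zp subrr.
  by rewrite -(pFrobenius_autE pF) pFrobenius_aut_nat subrr.
have s_uniq : uniq s.
  rewrite /= map_inj_in_uniq ?iota_uniq ?andbT; last first.
    by move=> a b; rewrite !mem_iota !add0n => ha hb; apply: natr_inj_lt_pchr.
  apply/mapP=> [[k]]; rewrite mem_iota add0n => kp zk.
  by move: (notin (inZp k)); rewrite /= Zp_cast ?pchr_gt1 // modn_small // zk eqxx.
by have := max_poly_roots P_neq0 s_roots s_uniq; rewrite /= size_map size_iota sizeP ltnn.
Qed.

Lemma ftr_Frobenius (y : F) : ftr y ^+ p = ftr y.
Proof.
case: pchr_spec => _ pF cardF.
rewrite -(pFrobenius_autE pF) /ftr rmorph_sum /=.
under eq_bigr => i _ do rewrite pFrobenius_autE -exprM -expnSr.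
move: fdeg_gt0 cardF; case: (r) => // r' _ cardF.
rewrite big_ord_recr big_ord_recl /= expn0 expr1 -cardF expf_card.
by rewrite addrC.
Qed.

(* [ftr] is a polynomial function of degree [p ^ (r - 1) < #|F|], so it cannot vanish on all of [F]. *)
Lemma ftr_neq0 : exists y : F, ftr y != 0.
Proof.
case: pchr_spec => p_pr _ cardF.
case: (boolP [exists y : F, ftr y != 0]) => [/existsP [y] | /existsPn ftr_eq0]; first by exists y.
exfalso.
move: fdeg_gt0 cardF; case Er: r => [//|r'] _ cardF.
pose P : {poly F} := \sum_(i < r'.+1) 'X^(p ^ i).
have hornerP y : P.[y] = ftr y.
  by rewrite /P horner_sum /ftr Er; apply: eq_bigr => i _; rewrite hornerXn.
have sizeP : size P = (p ^ r').+1.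
  have low : (size (\sum_(i < r') 'X^(p ^ i) : {poly F})%R <= p ^ r')%N.
    apply: (big_ind (fun q : {poly F} => size q <= p ^ r')%N) => [|a b ha hb|i _].
    - by rewrite size_poly0.
    - by apply: leq_trans (size_polyD _ _) _; rewrite geq_max ha hb.
    - by rewrite size_polyXn ltn_exp2l ?prime_gt1.
  by rewrite /P big_ord_recr /= addrC size_polyDl size_polyXn.
have P_neq0 : P != 0 by rewrite -size_poly_eq0 sizeP.
have roots : all (root P) (enum F).
  by apply/allP=> y _; rewrite /root hornerP; move: (ftr_eq0 y); rewrite negbK.
have := max_poly_roots P_neq0 roots (enum_uniq _).
rewrite -cardE cardF sizeP expnS ltnS leqNgt ltn_Pmull ?prime_gt1 //.
by rewrite expn_gt0 prime_gt0.
Qed.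

Lemma trZ_neq0 : exists y : F, trZ y != 0.
Proof.
have [y ftr_y] := ftr_neq0; have [k ky] := Frobenius_fixed_natr (ftr_Frobenius y).
exists y; rewrite (trZ_eq ky); apply: contraNneq ftr_y => k0.
by rewrite -ky k0.
Qed.

Lemma trZ_nondegenerate (x : F) : (forall l : F, trZ (l * x) = 0) -> x = 0.
Proof.
move=> trx0; apply: contraTeq isT => x_neq0.
have [y] := trZ_neq0; by rewrite -(mulfVK x_neq0 y) trx0 eqxx.
Qed.

End TraceForm.

Lemma eq_of_dvdn_mulDB (n j i i' : nat) : (i < n)%N -> (i' < n)%N ->
  (i' <= j * n + i)%N -> (n %| j * n + i - i')%N -> i = i'.
Proof.
move=> lt_in lt_i'n le /dvdnP [c eq_c].
case: (ltngtP c j) => [lt_cj | lt_jc | eq_cj]; last by subst; lia.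
- have : (c.+1 * n <= j * n)%N by rewrite leq_mul2r lt_cj orbT.
  lia.
- have : (j.+1 * n <= c * n)%N by rewrite leq_mul2r lt_jc orbT.
  lia.
Qed.

Section Sigma.
Variables (K : fieldType) (n : nat).
Implicit Types u v : 'rV[{poly K}]_n.

Lemma sigmaD u v : sigma (u + v) = sigma u + sigma v.
Proof. by rewrite /sigma -big_split; apply: eq_bigr => i _; rewrite mxE comp_polyD mulrDr. Qed.

Lemma sigma0 : sigma (0 : 'rV[{poly K}]_n) = 0.
Proof. by rewrite /sigma big1 // => i _; rewrite mxE comp_poly0 mulr0. Qed.

Lemma sigmaN u : sigma (- u) = - sigma u.
Proof. by apply/eqP; rewrite -subr_eq0 opprK -sigmaD addNr sigma0. Qed.

Lemma sigmaZ (q : {poly K}) u : sigma (q *: u) = (q \Po 'X^n) * sigma u.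
Proof. by rewrite /sigma mulr_sumr; apply: eq_bigr => i _; rewrite mxE comp_polyM mulrCA. Qed.

Lemma sigma_scaleXn (s : nat) u : sigma ('X^s *: u) = 'X^(s * n) * sigma u.
Proof. by rewrite sigmaZ comp_Xn_poly -exprM mulnC. Qed.

Lemma coef_sigma u j (i : 'I_n) : (sigma u)`_(j * n + i) = (u 0 i)`_j.
Proof.
have n_gt0 : (0 < n)%N by apply: leq_ltn_trans (ltn_ord i).
rewrite /sigma coef_sum (bigD1 i) //= big1 ?addr0.
  by rewrite coefXnM ltnNge leq_addl /= addnK coef_comp_poly_Xn // dvdn_mull // mulnK.
move=> i' ne_i'i; rewrite coefXnM; case: ltnP => // le.
rewrite coef_comp_poly_Xn //; case: ifP => // /(eq_of_dvdn_mulDB (ltn_ord i) (ltn_ord i') le).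
by move=> eq_ii'; case/eqP: ne_i'i; apply: val_inj.
Qed.

Lemma sigma_inj u : sigma u = 0 -> u = 0.
Proof.
move=> u0; apply/rowP => i; rewrite mxE; apply/polyP => j.
by rewrite -coef_sigma u0 !coef0.
Qed.

Lemma size_sigma u (s : nat) : (forall i, (size (u 0%R i) <= s.+1)%N) ->
  (size (sigma u) <= n + n * s)%N.
Proof.
move=> size_u; rewrite /sigma.
apply: (big_ind (fun q : {poly K} => size q <= n + n * s)%N) => [|a b ha hb|i _].
- by rewrite size_poly0.
- by apply: leq_trans (size_polyD _ _) _; rewrite geq_max ha hb.
apply: leq_trans (size_polyMleq _ _) _; rewrite size_polyXn /=.
have := size_comp_poly_leq (u 0 i) 'X^n; rewrite size_polyXn /= => size_comp.
have size_ui := size_u i.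
have : ((size (u 0%R i)).-1 * n <= n * s)%N.
  by rewrite mulnC leq_mul2l; apply/orP; right; lia.
move: size_comp (ltn_ord i); set a := ((size _).-1 * n)%N; set b := (n * s)%N.
lia.
Qed.

Lemma sigma_map (L : fieldType) (f : {rmorphism K -> L}) u :
  sigma (map_mx (map_poly f) u) = map_poly f (sigma u).
Proof.
rewrite /sigma rmorph_sum; apply: eq_bigr => i _.
by rewrite mxE rmorphM /= map_comp_poly !map_polyXn.
Qed.

End Sigma.

Section Encoding.
Variables (F : fieldType) (n kk : nat) (G : 'M[{poly F}]_(kk, n)).

Definition info_row (t : nat) (W : nat -> 'rV[F]_kk) : 'rV[{poly F}]_kk :=
  \sum_(j < t.+1) 'X^j *: map_mx polyC (W j).

Definition encode (t : nat) (W : nat -> 'rV[F]_kk) : {poly F} := sigma (info_row t W *m G).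

Lemma coef_info_row t W i j : (j < t.+1)%N -> (info_row t W 0 i)`_j = W j 0 i.
Proof.
move=> lt_jt; rewrite summxE coef_sum (bigD1 (Ordinal lt_jt)) //= big1 ?addr0.
  by rewrite !mxE mulrC mul_polyC coefZ coefXn eqxx mulr1.
move=> l ne_lj; rewrite !mxE mulrC mul_polyC coefZ coefXn.
by case: eqP => [eq_jl|]; rewrite ?mulr0 //; case/eqP: ne_lj; apply: val_inj.
Qed.

Lemma size_info_row t W i : (size (info_row t W 0%R i) <= t.+1)%N.
Proof.
rewrite summxE; apply: (big_ind (fun q : {poly F} => size q <= t.+1)%N) => [|a b ha hb|j _].
- by rewrite size_poly0.
- by apply: leq_trans (size_polyD _ _) _; rewrite geq_max ha hb.
rewrite !mxE mulrC mul_polyC; apply: leq_trans (size_scale_leq _ _) _.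
by rewrite size_polyXn ltn_ord.
Qed.

Lemma encode_lin t (c : F) W1 W2 :
  encode t (fun j => c *: W1 j + W2 j) = c%:P * encode t W1 + encode t W2.
Proof.
rewrite /encode -[c%:P](comp_polyC c 'X^n) -sigmaZ -sigmaD scalemxAl -mulmxDl.
congr (sigma (_ *m _)); rewrite scaler_sumr -big_split; apply: eq_bigr => j _.
by rewrite map_mxD map_mxZ scalerDr !scalerA mulrC.
Qed.

Lemma encode0 t : encode t (fun _ => 0) = 0.
Proof.
by rewrite /encode /info_row big1 ?mul0mx ?sigma0 // => j _; rewrite map_mx0 scaler0.
Qed.

Lemma eq_encode t W1 W2 : (forall j, (j < t.+1)%N -> W1 j = W2 j) -> encode t W1 = encode t W2.
Proof. by move=> eqW; rewrite /encode /info_row; congr (sigma (_ *m _)); apply: eq_bigr => j _; rewrite eqW. Qed.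

Lemma encodeS t W :
  encode t.+1 W = encode t W + encode 0 (fun _ => W t.+1) * 'X^(t.+1 * n).
Proof.
rewrite /encode /info_row big_ord_recr big_ord1 /= mulmxDl sigmaD -scalemxAl sigma_scaleXn.
by rewrite scale1r mulrC.
Qed.

Lemma encode_widen t W : encode t W = encode t.+1 (fun j => if (j < t.+1)%N then W j else 0).
Proof.
rewrite encodeS ltnn encode0 mul0r addr0.
by apply: eq_encode => j ->.
Qed.

Lemma encode_inj t W (H : 'M[{poly F}]_(n, kk)) : G *m H = 1%:M ->
  encode t W = 0 -> forall j, (j < t.+1)%N -> W j = 0.
Proof.
move=> GH /sigma_inj uG0 j lt_jt.
have u0 : info_row t W = 0 by rewrite -[info_row t W]mulmx1 -GH mulmxA uG0 mul0mx.
by apply/rowP => i; rewrite mxE -(coef_info_row W i lt_jt) u0 mxE coef0.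
Qed.

Lemma size_encode t W (mu : nat) : (forall i j, (size (G i j) <= mu.+1)%N) ->
  (size (encode t W) <= t.+1 * n + n * mu)%N.
Proof.
move=> size_G; rewrite (_ : (t.+1 * n + n * mu = n + n * (t + mu))%N); last first.
  by rewrite mulnDr mulSn; lia.
apply: size_sigma => j; rewrite mxE.
apply: (big_ind (fun q : {poly F} => size q <= (t + mu).+1)%N) => [|a b ha hb|i _].
- by rewrite size_poly0.
- by apply: leq_trans (size_polyD _ _) _; rewrite geq_max ha hb.
apply: leq_trans (size_polyMleq _ _) _.
have := size_info_row t W i; have := size_G i j.
by case: (size (info_row t W 0%R i)) => [|a]; case: (size (G i j)) => [|b] //=; lia.
Qed.

Lemma sigma_mul_encode (u : 'rV[{poly F}]_kk) : exists t W, sigma (u *m G) = encode t W.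
Proof.
pose t := (\max_(i < kk) size (u 0%R i))%N.
exists t, (fun j => \row_i (u 0 i)`_j); congr (sigma (_ *m _)).
apply/rowP => i; apply/polyP => j.
have size_ui : (size (u 0%R i) <= t.+1)%N.
  exact/leqW/(@leq_bigmax _ (fun i : 'I_kk => size (u 0%R i)) i).
case: (ltnP j t.+1) => lt_jt; first by rewrite coef_info_row // mxE.
rewrite nth_default ?(leq_trans size_ui) // summxE coef_sum big1 // => l _.
rewrite !mxE mulrC mul_polyC coefZ coefXn.
by case: eqP => [eq_jl|]; rewrite ?mulr0 //; move: (ltn_ord l); lia.
Qed.

End Encoding.

Notation dotp u v := (\sum_(i < size u) u`_i * v`_i).

Section DotProduct.
Variable K : fieldType.
Implicit Types u v : {poly K}.

Lemma dotp_widen u v M : (size u <= M)%N -> dotp u v = \sum_(i < M) u`_i * v`_i.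
Proof.
move=> le_uM; rewrite (big_ord_widen _ (fun i => u`_i * v`_i) le_uM) big_mkcond /=.
by apply: eq_bigr => i _; case: ltnP => // le; rewrite nth_default // mul0r.
Qed.

Lemma dotpC u v : dotp u v = dotp v u.
Proof.
rewrite (dotp_widen v (leq_maxl (size u) (size v))).
rewrite (dotp_widen u (leq_maxr (size u) (size v))).
by apply: eq_bigr => i _; rewrite mulrC.
Qed.

Lemma dotp0l v : dotp (0 : {poly K}) v = 0.
Proof. by rewrite size_poly0 big_ord0. Qed.

Lemma dotp0r u : dotp u (0 : {poly K}) = 0.
Proof. by rewrite big1 // => i _; rewrite coef0 mulr0. Qed.

Lemma dotpZr u c v : dotp u (c *: v) = c * dotp u v.
Proof. by rewrite mulr_sumr; apply: eq_bigr => i _; rewrite coefZ mulrCA. Qed.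

Lemma dotpCMr u c v : dotp u (c%:P * v) = c * dotp u v.
Proof. by rewrite mul_polyC dotpZr. Qed.

Lemma dotpCMl c u v : dotp (c%:P * u) v = c * dotp u v.
Proof. by rewrite dotpC dotpCMr dotpC. Qed.

Lemma dotpXn u c i : dotp u (c *: 'X^i) = c * u`_i.
Proof.
have lt_i : (i < maxn (size u) i.+1)%N by rewrite leq_max ltnSn orbT.
rewrite dotpZr (dotp_widen 'X^i (leq_maxl (size u) i.+1)).
rewrite (bigD1 (Ordinal lt_i)) //= coefXn eqxx mulr1 big1 ?addr0 // => j ne_ji.
by rewrite coefXn; case: eqP => [eq_ji|]; rewrite ?mulr0 //; case/eqP: ne_ji; apply: val_inj.
Qed.

End DotProduct.

Section PauliGroup.
Variable F : finFieldType.
Implicit Types g h z : pauli F.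

Lemma pauli_eta g : g = Pauli (ph g) (xa g) (zb g).
Proof. by case: g. Qed.

Lemma pmul_phase0 g h : ph g = 0 -> ph h = 0 -> dotp (zb g) (xa h) = 0 ->
  pmul g h = Pauli 0 (xa g + xa h) (zb g + zb h).
Proof. by rewrite /pmul => -> -> ->; rewrite trZ0 !addr0. Qed.

Lemma pinv_phase0 g : ph g = 0 -> dotp (zb g) (xa g) = 0 -> pinv g = Pauli 0 (- xa g) (- zb g).
Proof. by rewrite /pinv => -> ->; rewrite trZ0 oppr0 addr0. Qed.

Lemma pcommuteX g a : pcommute g (Pauli 0 a 0) -> trZ (dotp (zb g) a) = 0.
Proof.
move/(congr1 (@ph F)); rewrite /= dotp0l trZ0 addr0 add0r => /addrI.
by rewrite (dotp_widen _ (leqnn _)) => ->.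
Qed.

Lemma pcommuteZ g b : pcommute g (Pauli 0 0 b) -> trZ (dotp b (xa g)) = 0.
Proof. by move/(congr1 (@ph F)); rewrite /= dotp0r trZ0 addr0 add0r => /addrI. Qed.

Lemma commute_unit_paulis N z : (size (xa z) <= N)%N -> (size (zb z) <= N)%N ->
  (forall i (l : F), (i < N)%N ->
     pcommute z (Pauli 0 (l *: 'X^i) 0) /\ pcommute z (Pauli 0 0 (l *: 'X^i))) ->
  xa z = 0 /\ zb z = 0.
Proof.
move=> size_a size_b comm.
have coef_eq0 (c : {poly F}) : (size c <= N)%N ->
    (forall i (l : F), (i < N)%N -> trZ (l * c`_i) = 0) -> c = 0.
  move=> size_c tr0; apply/polyP => i; rewrite coef0.
  case: (ltnP i N) => [lt_iN | le_Ni]; last by rewrite nth_default // (leq_trans size_c).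
  by apply: trZ_nondegenerate => l; apply: tr0.
split; apply: coef_eq0 => // i l lt_iN; have [commX commZ] := comm i l lt_iN.
- by have := pcommuteZ commZ; rewrite dotpC dotpXn.
- by have := pcommuteX commX; rewrite dotpXn.
Qed.

Lemma center_PinfP z : center (@Pinf F) z <-> xa z = 0 /\ zb z = 0.
Proof.
split=> [[_ comm] | [a0 b0]].
  apply: (@commute_unit_paulis (maxn (size (xa z)) (size (zb z)))) => [||i l _].
  - exact: leq_maxl.
  - exact: leq_maxr.
  - by split; apply: comm.
by split=> // g _; rewrite /pcommute /pmul a0 b0 dotp0l dotp0r trZ0 !addr0 !add0r addrC.
Qed.

Lemma seq_wt_iota (v : {poly F}) : seq_wt v = count (fun i => v`_i != 0) (iota 0 (size v)).
Proof. by rewrite /seq_wt -{1}(mkseq_nth 0 v) /mkseq count_map. Qed.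

Lemma seq_wt_le_pwt g : (seq_wt (xa g) <= pwt g)%N /\ (seq_wt (zb g) <= pwt g)%N.
Proof.
rewrite /pwt !seq_wt_iota; split.
  rewrite -(subnKC (leq_maxl (size (xa g)) (size (zb g)))) iotaD count_cat.
  by apply: leq_trans (leq_addr _ _); apply: sub_count => i /= ->.
rewrite -(subnKC (leq_maxr (size (xa g)) (size (zb g)))) iotaD count_cat.
by apply: leq_trans (leq_addr _ _); apply: sub_count => i /= ->; rewrite orbT.
Qed.

Lemma pwtX c (v : {poly F}) : pwt (Pauli c v 0) = seq_wt v.
Proof.
rewrite /pwt seq_wt_iota /= size_poly0 maxn0.
by apply: eq_count => i; rewrite coef0 eqxx orbF.
Qed.

End PauliGroup.

Lemma is_min_dominated (W1 W2 : nat -> Prop) :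
  (forall w, W1 w -> W2 w) -> (forall w, W2 w -> exists2 w', W1 w' & (w' <= w)%N) ->
  forall d, is_min W1 d <-> is_min W2 d.
Proof.
move=> W12 W21 d; split=> [[W1d min1] | [W2d min2]].
  by split=> [|e /W21 [w' /min1 le_dw' le_w'e]]; [apply: W12 | apply: leq_trans le_w'e].
have [w' W1w' le_w'd] := W21 _ W2d.
have eq_w'd : w' = d by apply/eqP; rewrite eqn_leq le_w'd min2 //; apply: W12.
by split=> [|e /W12 /min2]; rewrite -?eq_w'd.
Qed.

Lemma gen_subgroup (F : finFieldType) (A : pauli F -> Prop) : is_subgroup (gen A).
Proof. by split; [apply: gen_one | apply: gen_mul | apply: gen_inv]. Qed.

Lemma gen_sub (F : finFieldType) (A B : pauli F -> Prop) :
  (forall g, A g -> B g) -> is_subgroup B -> forall g, gen A g -> B g.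
Proof. by move=> AB [B1 BM BV] g; elim=> //; auto. Qed.

Section CSSStabilizer.
Variables (F : finFieldType) (n kk : nat) (G : 'M[{poly F}]_(kk, n)) (C : {poly F} -> Prop).
Hypothesis CG : forall v, C v <-> exists u, v = sigma (u *m G).
Hypothesis C_selforth : forall v, C v -> edual C v.

Definition Ct (t : nat) (a : {poly F}) : Prop := exists W, a = encode G t W.

Definition css_pauli (A : {poly F} -> Prop) (g : pauli F) : Prop :=
  [/\ ph g = 0, A (xa g) & A (zb g)].

Definition stab0 : pauli F -> Prop := css_pauli (Ct 0).

Lemma code_dot a b : C a -> C b -> dotp a b = 0.
Proof. by move=> Ca /C_selforth; apply. Qed.

Lemma code0 : C 0.
Proof. by apply/CG; exists 0; rewrite mul0mx sigma0. Qed.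

Lemma codeD a b : C a -> C b -> C (a + b).
Proof. by move=> /CG [u ->] /CG [v ->]; apply/CG; exists (u + v); rewrite mulmxDl sigmaD. Qed.

Lemma codeN a : C a -> C (- a).
Proof. by move=> /CG [u ->]; apply/CG; exists (- u); rewrite mulNmx sigmaN. Qed.

Lemma codeCM (c : F) a : C a -> C (c%:P * a).
Proof. by move=> /CG [u ->]; apply/CG; exists (c%:P *: u); rewrite -scalemxAl sigmaZ comp_polyC. Qed.

Lemma codeMXn a s : C a -> C (a * 'X^(s * n)).
Proof.
by move=> /CG [u ->]; apply/CG; exists ('X^s *: u); rewrite -scalemxAl sigma_scaleXn mulrC.
Qed.

Lemma code_Ct a : C a <-> exists t, Ct t a.
Proof.
rewrite CG; split=> [[u ->] | [t [W ->]]]; last by exists (info_row t W).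
by have [t [W ->]] := sigma_mul_encode G u; exists t, W.
Qed.

Lemma Ct_code t a : Ct t a -> C a.
Proof. by move=> Cta; apply/code_Ct; exists t. Qed.

Lemma Ct0 t : Ct t 0.
Proof. by exists (fun _ => 0); rewrite encode0. Qed.

Lemma CtD t a b : Ct t a -> Ct t b -> Ct t (a + b).
Proof.
by move=> [W1 ->] [W2 ->]; exists (fun j => 1 *: W1 j + W2 j); rewrite encode_lin mul1r.
Qed.

Lemma CtN t a : Ct t a -> Ct t (- a).
Proof.
move=> [W ->]; exists (fun j => (-1) *: W j + 0).
by rewrite encode_lin encode0 addr0 polyCN mulN1r.
Qed.

Lemma Ct_widen t a : Ct t a -> Ct t.+1 a.
Proof. by move=> [W ->]; eexists; apply: encode_widen. Qed.

Lemma Ct_le t t' a : (t <= t')%N -> Ct t a -> Ct t' a.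
Proof.
move=> /subnK <-; elim: (t' - t)%N => [|d IH] Cta; first by rewrite add0n.
by rewrite addSn; apply/Ct_widen/IH.
Qed.

Lemma CtS t a :
  Ct t.+1 a <-> exists b c, [/\ Ct t b, Ct 0 c & a = b + c * 'X^(t.+1 * n)].
Proof.
split=> [[W ->] | [b [c [[Wb ->] [Wc ->] ->]]]].
  by exists (encode G t W), (encode G 0 (fun _ => W t.+1)); rewrite encodeS; split; eexists.
exists (fun j => if (j < t.+1)%N then Wb j else Wc 0%N); rewrite encodeS /= ltnn.
have -> : encode G 0 (fun _ => Wc 0%N) = encode G 0 Wc by apply: eq_encode => -[].
suff -> : encode G t (fun j => if (j < t.+1)%N then Wb j else Wc 0%N) = encode G t Wb by [].
by apply: eq_encode => j ->.
Qed.

Lemma css_pauli_sub (A B : {poly F} -> Prop) g :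
  (forall a, A a -> B a) -> css_pauli A g -> css_pauli B g.
Proof. by move=> AB [g0 Aa Ab]; split; auto. Qed.

Lemma css_pmul g h : css_pauli C g -> css_pauli C h ->
  pmul g h = Pauli 0 (xa g + xa h) (zb g + zb h).
Proof. by move=> [g0 _ Cbg] [h0 Cah _]; apply: pmul_phase0; rewrite // code_dot. Qed.

Lemma css_pinv g : css_pauli C g -> pinv g = Pauli 0 (- xa g) (- zb g).
Proof. by move=> [g0 Ca Cb]; apply: pinv_phase0; rewrite // code_dot. Qed.

Lemma css_commute g h : css_pauli C g -> css_pauli C h -> pcommute g h.
Proof. by move=> Cg Ch; rewrite /pcommute !css_pmul // addrC [zb g + _]addrC. Qed.

Lemma css_subgroup (A : {poly F} -> Prop) : (forall a, A a -> C a) ->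
  A 0 -> (forall a b, A a -> A b -> A (a + b)) -> (forall a, A a -> A (- a)) ->
  is_subgroup (css_pauli A).
Proof.
move=> AC A0 AD AN; have AC' g : css_pauli A g -> css_pauli C g by apply: css_pauli_sub.
split=> [|g h Ag Ah|g Ag]; first by split.
  have [_ Aag Abg] := Ag; have [_ Aah Abh] := Ah.
  by rewrite css_pmul; [split=> /=; auto | apply: AC' ..].
have [_ Aag Abg] := Ag.
by rewrite css_pinv; [split=> /=; auto | apply: AC'].
Qed.

Lemma Ct_subgroup t : is_subgroup (css_pauli (Ct t)).
Proof. exact: css_subgroup (@Ct_code t) (Ct0 t) (@CtD t) (@CtN t). Qed.

Lemma Sfam_css t g : Sfam n stab0 t g -> css_pauli (Ct t) g.
Proof.
elim: t g => [//|t IH] g /=; apply: gen_sub (Ct_subgroup t.+1) g.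
move=> g [/IH | [M [[M0 Ca Cb] ->]]]; first by apply: css_pauli_sub; apply: Ct_widen.
have shift e : Ct 0 e -> Ct t.+1 (e * 'X^(t.+1 * n)).
  by move=> Cte; apply/CtS; exists 0, e; rewrite add0r; split; [exact: Ct0 | exact: Cte |].
by split; [exact: M0 | apply: shift | apply: shift].
Qed.

Lemma css_Sfam t g : css_pauli (Ct t) g -> Sfam n stab0 t g.
Proof.
elim: t g => [//|t IH] g [g0 /CtS [a [c [Cta Ctc ga]]] /CtS [b [d [Ctb Ctd gb]]]] /=.
have shifted (e : {poly F}) : Ct 0 e -> C (e * 'X^(t.+1 * n)) by move/Ct_code/codeMXn.
have CX : css_pauli C (Pauli 0 (c * 'X^(t.+1 * n)) 0) by split=> //=; [apply: shifted | apply: code0].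
have CZ : css_pauli C (Pauli 0 0 (d * 'X^(t.+1 * n))) by split=> //=; [apply: code0 | apply: shifted].
have Cab : css_pauli C (Pauli 0 a b) by split; [by [] | exact: Ct_code Cta | exact: Ct_code Ctb].
have CXZ : css_pauli C (pmul (Pauli 0 (c * 'X^(t.+1 * n)) 0) (Pauli 0 0 (d * 'X^(t.+1 * n)))).
  by rewrite css_pmul //; split; rewrite /= ?addr0 ?add0r //; apply: shifted.
have -> : g = pmul (Pauli 0 a b) (pmul (Pauli 0 (c * 'X^(t.+1 * n)) 0) (Pauli 0 0 (d * 'X^(t.+1 * n)))).
  by rewrite css_pmul // css_pmul //= addr0 add0r (pauli_eta g) g0 ga gb.
apply: gen_mul; first by apply: gen_in; left; apply: IH.
apply: gen_mul; apply: gen_in; right.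
- exists (Pauli 0 c 0); split; first by split; [by [] | exact: Ctc | exact: Ct0].
  by rewrite /pshift /= mul0r.
- exists (Pauli 0 0 d); split; first by split; [by [] | exact: Ct0 | exact: Ctd].
  by rewrite /pshift /= mul0r.
Qed.

Lemma Sfam_Sfull t g : Sfam n stab0 t g -> Sfull n stab0 g.
Proof.
elim: t g => [|t IH] g /=.
  by move=> s0g; apply: gen_in; exists 0%N, g; rewrite (pauli_eta g) /pshift mul0n expr0 !mulr1.
apply: gen_sub (gen_subgroup _) g => g [/IH // | [M [s0M ->]]].
by apply: gen_in; exists t.+1, M.
Qed.

Lemma SfullP g : Sfull n stab0 g <-> css_pauli C g.
Proof.
split.
  apply: gen_sub (css_subgroup (fun a Ca => Ca) code0 codeD codeN) g.
  move=> _ [t [M [[M0 Ca Cb] ->]]]; rewrite /pshift; split=> /=; first exact: M0.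
  - exact/codeMXn/(Ct_code Ca).
  - exact/codeMXn/(Ct_code Cb).
case=> g0 /code_Ct [t1 Ca] /code_Ct [t2 Cb].
apply: (@Sfam_Sfull (maxn t1 t2)); apply: css_Sfam.
by split; [exact: g0 | exact: Ct_le (leq_maxl _ _) Ca | exact: Ct_le (leq_maxr _ _) Cb].
Qed.

End CSSStabilizer.

Section RowEntries.
Variables (F : fieldType) (m : nat).

Definition nat_entry (x : 'rV[F]_m) (r : nat) : F := \sum_(i < m | val i == r) x 0 i.

Lemma nat_entry_ord x (i : 'I_m) : nat_entry x i = x 0 i.
Proof. by rewrite /nat_entry (big_pred1 i). Qed.

Lemma nat_entry_lin a x y r : nat_entry (a *: x + y) r = a * nat_entry x r + nat_entry y r.
Proof. by rewrite /nat_entry mulr_sumr -big_split; apply: eq_bigr => i _; rewrite !mxE. Qed.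

End RowEntries.

Lemma symvec_lin (F : finFieldType) N (a : F) (p1 p2 q1 q2 : {poly F}) :
  symvec N (Pauli 0 (a%:P * p1 + p2) (a%:P * q1 + q2)) =
  a *: symvec N (Pauli 0 p1 q1) + symvec N (Pauli 0 p2 q2).
Proof.
rewrite /symvec /= scale_row_mx add_row_mx.
by congr (row_mx _ _); apply/rowP => i; rewrite !mxE coefD coefCM.
Qed.

Lemma symvec_eq0 (F : finFieldType) N (g : pauli F) : inP N g -> symvec N g = 0 ->
  xa g = 0 /\ zb g = 0.
Proof.
move=> [size_a size_b]; rewrite /symvec => /eqP; rewrite row_mx_eq0 => /andP [/eqP a0 /eqP b0].
have trunc0 (c : {poly F}) : (size c <= N)%N -> \row_(i < N) c`_i = 0 -> c = 0.
  move=> size_c c0; apply/polyP => i; rewrite coef0.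
  case: (ltnP i N) => [lt_iN | le_Ni]; last by rewrite nth_default // (leq_trans size_c).
  by have := congr1 (fun v : 'rV_N => v 0 (Ordinal lt_iN)) c0; rewrite !mxE.
by split; apply: trunc0.
Qed.

Section StabilizerConditions.
Variables (F : finFieldType) (n k kk mu : nat) (G : 'M[{poly F}]_(kk, n)) (H : 'M[{poly F}]_(n, kk)).
Variable C : {poly F} -> Prop.
Hypothesis GH : G *m H = 1%:M.
Hypothesis size_G : forall i j, (size (G i j) <= mu.+1)%N.
Hypothesis CG : forall v, C v <-> exists u, v = sigma (u *m G).
Hypothesis C_selforth : forall v, C v -> edual C v.
Hypothesis nk_double : (n - k = kk + kk)%N.

Local Notation stab0 := (stab0 G).

Lemma size_Ct t a : Ct G t a -> (size a <= Nt n (n * mu) t)%N.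
Proof. by case=> W ->; rewrite /Nt addn1; apply: size_encode. Qed.

Lemma css_Ct_inP t g : css_pauli (Ct G t) g -> inP (Nt n (n * mu) t) g.
Proof. by case=> _ ha hb; split; apply: size_Ct. Qed.

Lemma stab0_condS3 : condS3 n (n * mu) stab0.
Proof.
move=> t g Stg [inPg comm]; have [g0 _ _] := Sfam_css CG C_selforth Stg.
have [size_a size_b] := inPg.
have [a0 b0] : xa g = 0 /\ zb g = 0.
  apply: (commute_unit_paulis size_a size_b) => i l lt_iN.
  have size_unit : (size (l *: 'X^i : {poly F}) <= Nt n (n * mu) t)%N.
    by apply: leq_trans (size_scale_leq _ _) _; rewrite size_polyXn.
  by split; apply: comm; split; rewrite //= size_poly0.
by rewrite (pauli_eta g) g0 a0 b0.
Qed.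

Section Truncation.
Variable t : nat.
Local Notation R := ((t + 1) * (n - k))%N.
Local Notation N := (Nt n (n * mu) t).

(* Coordinates of [x : 'rV_R] are read in blocks of [n - k = kk + kk]:
   block [j] holds the [X]- and then the [Z]-information row of time [j]. *)
Definition infoX (x : 'rV[F]_R) (j : nat) : 'rV[F]_kk :=
  \row_(i < kk) nat_entry x (j * (n - k) + i).
Definition infoZ (x : 'rV[F]_R) (j : nat) : 'rV[F]_kk :=
  \row_(i < kk) nat_entry x (j * (n - k) + kk + i).

Definition css_embed (x : 'rV[F]_R) : 'rV[F]_(N + N) :=
  symvec N (Pauli 0 (encode G t (infoX x)) (encode G t (infoZ x))).

Lemma css_embed_is_linear : linear css_embed.
Proof.
move=> a x y; rewrite /css_embed -symvec_lin.
have -> : encode G t (infoX (a *: x + y)) = a%:P * encode G t (infoX x) + encode G t (infoX y).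
  by rewrite -encode_lin; apply: eq_encode => j _; apply/rowP => i; rewrite !mxE nat_entry_lin.
have -> : encode G t (infoZ (a *: x + y)) = a%:P * encode G t (infoZ x) + encode G t (infoZ y).
  by rewrite -encode_lin; apply: eq_encode => j _; apply/rowP => i; rewrite !mxE nat_entry_lin.
by [].
Qed.

HB.instance Definition _ := GRing.isLinear.Build F _ _ _ css_embed css_embed_is_linear.

Lemma block_lt j s : (j < t.+1)%N -> (s < n - k)%N -> (j * (n - k) + s < R)%N.
Proof.
move=> lt_jt lt_s; rewrite addn1.
have : (j.+1 * (n - k) <= t.+1 * (n - k))%N by rewrite leq_mul2r lt_jt orbT.
by rewrite mulSn; lia.
Qed.

Lemma nat_entry_block (x : 'rV[F]_R) j s (lt_jt : (j < t.+1)%N) (lt_s : (s < n - k)%N) :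
  nat_entry x (j * (n - k) + s) = x 0 (Ordinal (block_lt lt_jt lt_s)).
Proof. by rewrite -nat_entry_ord. Qed.

Lemma block_decomp (r : 'I_R) :
  exists j s, [/\ (j < t.+1)%N, (s < n - k)%N & val r = (j * (n - k) + s)%N].
Proof.
have nk0 : (0 < n - k)%N.
  by move: (leq_ltn_trans (leq0n r) (ltn_ord r)); rewrite muln_gt0 => /andP [].
exists (r %/ (n - k))%N, (r %% (n - k))%N; split; last exact: divn_eq.
- by rewrite ltn_divLR //; apply: leq_trans (ltn_ord r) _; rewrite addn1.
- by rewrite ltn_mod.
Qed.

Lemma css_embed_eq0 x : css_embed x = 0 -> x = 0.
Proof.
have size_enc W : (size (encode G t W) <= N)%N by rewrite /Nt addn1; apply: size_encode.
move=> embed0.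
have inPx : inP N (Pauli 0 (encode G t (infoX x)) (encode G t (infoZ x))).
  by split; apply: size_enc.
have [/(encode_inj GH) X0 /(encode_inj GH) Z0] := symvec_eq0 inPx embed0.
apply/rowP => r; rewrite mxE -nat_entry_ord.
have [j [s [lt_jt lt_s er]]] := block_decomp r; rewrite er.
case: (ltnP s kk) => [lt_skk | le_kks].
  by have := congr1 (fun w : 'rV_kk => w 0 (Ordinal lt_skk)) (X0 j lt_jt); rewrite !mxE.
have lt_s' : (s - kk < kk)%N by lia.
have := congr1 (fun w : 'rV_kk => w 0 (Ordinal lt_s')) (Z0 j lt_jt).
by rewrite !mxE /= -addnA subnKC.
Qed.

Definition css_coords (Wx Wz : nat -> 'rV[F]_kk) : 'rV[F]_R :=
  \row_(r < R) if (r %% (n - k) < kk)%N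
                then nat_entry (Wx (r %/ (n - k))%N) (r %% (n - k))
                else nat_entry (Wz (r %/ (n - k))%N) (r %% (n - k) - kk).

Lemma infoX_coords Wx Wz j : (j < t.+1)%N -> infoX (css_coords Wx Wz) j = Wx j.
Proof.
move=> lt_jt; apply/rowP => i; rewrite mxE.
have lt_i : (i < n - k)%N by rewrite nk_double ltn_addr.
have nk0 : (0 < n - k)%N by apply: leq_ltn_trans lt_i.
rewrite (nat_entry_block _ lt_jt lt_i) mxE /= divnMDl // divn_small // addn0.
by rewrite modnMDl modn_small // ltn_ord nat_entry_ord.
Qed.

Lemma infoZ_coords Wx Wz j : (j < t.+1)%N -> infoZ (css_coords Wx Wz) j = Wz j.
Proof.
move=> lt_jt; apply/rowP => i; rewrite mxE.
have lt_i : (kk + i < n - k)%N by rewrite nk_double ltn_add2l.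
have nk0 : (0 < n - k)%N by apply: leq_ltn_trans lt_i.
rewrite -addnA (nat_entry_block _ lt_jt lt_i) mxE /= divnMDl // divn_small // addn0.
by rewrite modnMDl modn_small // ltnNge leq_addr /= addKn nat_entry_ord.
Qed.

Lemma Sfam_symvecP v : (exists g, Sfam n stab0 t g /\ symvec N g = v) <->
  (v <= lin1_mx css_embed)%MS.
Proof.
split=> [[g [Stg <-]] | /submxP [x ->]].
  have [g0 [Wx ga] [Wz gb]] := Sfam_css CG C_selforth Stg.
  apply/submxP; exists (css_coords Wx Wz).
  rewrite mul_rV_lin1 /= /css_embed (pauli_eta g) g0 ga gb.
  have -> : encode G t (infoX (css_coords Wx Wz)) = encode G t Wx.
    by apply: eq_encode => j; apply: infoX_coords.
  have -> : encode G t (infoZ (css_coords Wx Wz)) = encode G t Wz.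
    by apply: eq_encode => j; apply: infoZ_coords.
  by [].
exists (Pauli 0 (encode G t (infoX x)) (encode G t (infoZ x))); split; last by rewrite mul_rV_lin1.
by apply: (css_Sfam CG C_selforth); split; rewrite //=; eexists.
Qed.

Lemma Sfam_dim : exists B : 'M[F]_(R, N + N), row_free B /\
  (forall v : 'rV[F]_(N + N), (exists g, Sfam n stab0 t g /\ symvec N g = v) <-> (v <= B)%MS).
Proof.
exists (lin1_mx css_embed); split; last exact: Sfam_symvecP.
by apply/inj_row_free => x; rewrite mul_rV_lin1; apply: css_embed_eq0.
Qed.

End Truncation.

Lemma stab0_condS2 : condS2 n k (n * mu) stab0.
Proof. exact: Sfam_dim. Qed.

Lemma stab0_css g : stab0 g -> css_pauli C g.
Proof. by case=> g0 Ca Cb; split; [| exact (Ct_code CG Ca) | exact (Ct_code CG Cb)]. Qed.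

Lemma pshift_css s g : css_pauli C g -> css_pauli C (pshift (s * n) g).
Proof. by case=> g0 Ca Cb; split; rewrite //=; apply: (codeMXn CG). Qed.

Lemma stab0_conv_stab_code : is_conv_stab_code n k (n * mu) stab0.
Proof.
split=> [g /css_Ct_inP | | g h /stab0_css Cg /stab0_css Ch | t _ M N /stab0_css CM /stab0_css CN |].
- by rewrite /Nt add0n mul1n.
- exact: Ct_subgroup CG C_selforth 0%N.
- exact: css_commute C_selforth _ _ Cg Ch.
- exact: css_commute C_selforth _ _ (pshift_css _ CM) CN.
- exact: (conj stab0_condS2 stab0_condS3).
Qed.

End StabilizerConditions.

Section FreeDistance.
Variables (F : finFieldType) (n kk : nat) (G : 'M[{poly F}]_(kk, n)) (C : {poly F} -> Prop).
Hypothesis CG : forall v, C v <-> exists u, v = sigma (u *m G).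
Hypothesis C_selforth : forall v, C v -> edual C v.

Local Notation S := (Sfull n (stab0 G)).
Local Notation SfullP := (SfullP CG C_selforth).

Lemma centralizer_SfullP e : centralizer (@Pinf F) S e <-> edual C (xa e) /\ edual C (zb e).
Proof.
split=> [[_ comm] | [dual_a dual_b]].
  split=> u Cu; apply: trZ_nondegenerate => l.
  - have /comm /pcommuteZ : S (Pauli 0 0 (l%:P * u)).
      by apply/SfullP; split=> //=; [exact: code0 CG | exact (codeCM CG l Cu)].
    by rewrite dotpCMl.
  - have /comm /pcommuteX : S (Pauli 0 (l%:P * u) 0).
      by apply/SfullP; split=> //=; [exact (codeCM CG l Cu) | exact: code0 CG].
    by rewrite dotpCMr => tr0; rewrite dotpC.
split=> // s /SfullP [s0 Ca Cb].
rewrite /pcommute /pmul s0 (dual_a _ Cb) dotpC (dual_b _ Ca) addr0 add0r.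
by rewrite [xa e + _]addrC [zb e + _]addrC.
Qed.

Lemma center_mul_SfullP e :
  (exists z s, [/\ center (@Pinf F) z, S s & e = pmul z s]) <-> C (xa e) /\ C (zb e).
Proof.
split=> [[z [s [/center_PinfP [za zb0] /SfullP [_ Ca Cb] ->]]] | [Ca Cb]].
  by rewrite /pmul /= za zb0 !add0r.
exists (Pauli (ph e) 0 0), (Pauli 0 (xa e) (zb e)); split.
- exact/center_PinfP.
- exact/SfullP.
- by rewrite /pmul /= dotp0l trZ0 !addr0 !add0r -pauli_eta.
Qed.

(* A logical operator [X(a)Z(b)] has [a] or [b] in [C^perp \ C]; conversely [X(v)] is one for such [v]. *)
Lemma free_dist_dual d : is_min_wt (fun v => edual C v /\ ~ C v) d <-> free_dist n (stab0 G) d.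
Proof.
apply: is_min_dominated => [_ [v [[dual_v notCv] v_neq0 <-]] | _ [e [/centralizer_SfullP [dual_a dual_b] notZS <-]]].
  exists (Pauli 0 v 0); split; last exact: pwtX.
  - by apply/centralizer_SfullP; split=> //= u _; apply: dotp0r.
  - by move/center_mul_SfullP => /= [].
have [wt_a wt_b] := seq_wt_le_pwt e.
have nonzero (a : {poly F}) : ~ C a -> a != 0 by apply: contra_not_neq => ->; apply: code0 CG.
case: (classic (C (xa e))) => Ca.
  have notCb : ~ C (zb e) by move=> Cb; apply: notZS; apply/center_mul_SfullP.
  by exists (seq_wt (zb e)) => //; exists (zb e); split; [by split | exact: nonzero |].
by exists (seq_wt (xa e)) => //; exists (xa e); split; [by split | exact: nonzero |].
Qed.

Lemma pure_of_min_wt d : is_min_wt (edual C) d -> is_pure n (stab0 G) d.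
Proof.
move=> [_ min_d] g /SfullP [g0 Ca Cb] lt_gd; apply/center_PinfP.
have [wt_a wt_b] := seq_wt_le_pwt g.
have small (a : {poly F}) : C a -> (seq_wt a <= pwt g)%N -> a = 0.
  move=> Ca' wt_a'; apply: contraTeq lt_gd => a_neq0; rewrite -leqNgt.
  by apply: leq_trans wt_a'; apply: min_d; exists a; split=> //; apply: C_selforth.
by split; apply: small.
Qed.

End FreeDistance.

Section Degree.
Variables (F : finFieldType) (L : fieldExtType F) (beta : L).
Hypothesis normal_basis : basis_of fullv [:: beta; beta ^+ #|F|].
Variables (n kk : nat) (G : 'M[{poly F}]_(kk, n)) (C : {poly F} -> Prop).
Hypothesis CG : forall v, C v <-> exists u, v = sigma (u *m G).
Hypothesis C_selforth : forall v, C v -> edual C v.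

Local Notation f := (map_poly (GRing.in_alg L)).
Local Notation betaq := (beta ^+ #|F|).

Lemma row_deg_map (D : 'M[{poly F}]_(kk, n)) i : row_deg (map_mx f D) i = row_deg D i.
Proof. by apply: eq_bigr => j _; rewrite mxE size_map_poly. Qed.

Lemma max_minor_deg_map (D : 'M[{poly F}]_(kk, n)) : max_minor_deg (map_mx f D) = max_minor_deg D.
Proof.
apply: eq_bigr => h _; rewrite (_ : colsub h (map_mx f D) = map_mx f (colsub h D)).
  by rewrite det_map_mx size_map_poly.
by apply/matrixP => i j; rewrite !mxE.
Qed.

Lemma tauE (g : pauli F) : tau beta g = f (xa g) * beta%:P + f (zb g) * betaq%:P.
Proof.
apply/polyP => i; rewrite coef_poly coefD !coefMC !coef_map /= !mulr_algl.
case: ltnP => // le_i; rewrite !nth_default ?scale0r ?addr0 //.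
- exact: leq_trans (leq_maxr _ _) le_i.
- exact: leq_trans (leq_maxl _ _) le_i.
Qed.

Definition normal_tuple : 2.-tuple L := in_tuple [:: beta; betaq].

Local Notation coordp i := (map_poly (coord normal_tuple i)).

Lemma normal_decomp (y : L) :
  y = coord normal_tuple 0 y *: beta + coord normal_tuple 1 y *: betaq.
Proof.
rewrite {1}(coord_basis (normal_basis : basis_of fullv normal_tuple) (memvf y)).
rewrite !big_ord_recr big_ord0 /= add0r.
by congr (coord normal_tuple _ y *: _ + coord normal_tuple _ y *: _); apply: val_inj.
Qed.

Lemma poly_normal_decomp (p : {poly L}) :
  p = beta%:P * f (coordp 0 p) + betaq%:P * f (coordp 1 p).
Proof.
apply/polyP => i; rewrite coefD !coefCM !coef_map /= !mulr_algr.
exact: normal_decomp.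
Qed.

(* [tau(S)] is the [L]-span of [C], because [(beta, beta^q)] is an [F]-basis of [L]. *)
Lemma tau_SfullP v : (exists g, Sfull n (stab0 G) g /\ v = tau beta g) <->
  exists u, v = sigma (u *m map_mx f G).
Proof.
split=> [[g [/(SfullP CG C_selforth) [_ /CG [ua ea] /CG [ub eb]] ->]] | [u ->]].
  exists (beta%:P *: map_mx f ua + betaq%:P *: map_mx f ub).
  rewrite tauE mulmxDl -!scalemxAl sigmaD !sigmaZ !comp_polyC -!map_mxM.
  by rewrite !sigma_map ea eb [_ * beta%:P]mulrC [_ * betaq%:P]mulrC.
pose ua := map_mx (coordp 0) u; pose ub := map_mx (coordp 1) u.
have eu : u = beta%:P *: map_mx f ua + betaq%:P *: map_mx f ub.
  by apply/matrixP => i j; rewrite !mxE -poly_normal_decomp.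
exists (Pauli 0 (sigma (ua *m G)) (sigma (ub *m G))); split.
  by apply/(SfullP CG C_selforth); split=> //=; apply/CG; eexists.
rewrite tauE /= {1}eu mulmxDl -!scalemxAl sigmaD !sigmaZ !comp_polyC -!map_mxM.
by rewrite !sigma_map [_ * beta%:P]mulrC [_ * betaq%:P]mulrC.
Qed.

Lemma stab0_degree (delta : nat) (H : 'M[{poly F}]_(n, kk)) : G *m H = 1%:M ->
  delta = (\sum_(i < kk) row_deg G i)%N -> delta = max_minor_deg G ->
  has_degree n (stab0 G) beta delta.
Proof.
move=> GH delta_sum delta_minor.
exists kk, (\max_(i < kk) row_deg G i)%N, (map_mx f G); split; last exact: tau_SfullP.
- by exists (map_mx f H); rewrite -map_mxM GH map_mx1.
- by rewrite delta_sum; apply: eq_bigr => i _; rewrite row_deg_map.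
- by rewrite max_minor_deg_map.
- by apply: eq_bigr => i _; rewrite row_deg_map.
Qed.

End Degree.

Theorem mainTheorem5 (F : finFieldType) (L : fieldExtType F) (beta : L)
    (dimL : \dim {: L} = 2%N)
    (normal_basis : basis_of fullv [:: beta; beta ^+ #|F|])
    (n k delta mu : nat) (C : {poly F} -> Prop)
    (hkn : (k <= n)%N) (heven : ~~ odd (n - k))
    (hC : is_conv_code n (n - k)./2 delta mu C)
    (hself : forall v, C v -> edual C v) :
  exists S0 : pauli F -> Prop,
    [/\ is_conv_stab_code n k (n * mu) S0,
        has_degree n S0 beta delta,
        (forall d, is_min_wt (fun v => edual C v /\ ~ C v) d <-> free_dist n S0 d) &
        (forall d, is_min_wt (fun v => edual C v /\ ~ C v) d ->
                   is_min_wt (edual C) d -> is_pure n S0 d)].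
Proof.
case: hC => G [[H GH] delta_sum delta_minor mu_max CG].
have nk_double : (n - k = (n - k)./2 + (n - k)./2)%N.
  by rewrite addnn -[LHS](odd_double_half (n - k)) (negbTE heven).
have size_G i j : (size (G i j) <= mu.+1)%N.
  rewrite mu_max; apply: leq_trans (leqSpred _) _; rewrite ltnS.
  apply: leq_trans (leq_bigmax (F := fun i => row_deg G i) i).
  exact: (leq_bigmax (F := fun j => (size (G i j)).-1) j).
exists (stab0 G); split.
- exact: stab0_conv_stab_code GH size_G CG hself nk_double.
- exact (stab0_degree normal_basis CG hself GH delta_sum delta_minor).
- exact: free_dist_dual CG hself.
- by move=> d _ min_d; exact (pure_of_min_wt CG hself min_d).
Qed.
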